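(* Every regular coherent group is torsionfree.
   Context: A ring is regular if it is Noetherian and every finitely generated module has a finite-dimensional resolution by finitely generated projective modules; it is regular coherent if every finitely presented module has a finite-dimensional resolution by finitely generated projective modules. A group $G$ is regular coherent if the group ring $RG$ is regular coherent for every regular ring $R$. *)

From HB Require Import structures.
From mathcomp Require Import all_boot all_order all_algebra.

Set Implicit Arguments.
Unset Strict Implicit.
Unset Printing Implicit Defensive.

Import GRing.Theory.
Local Open Scope ring_scope.

Definition surj (A B : Type) (f : A -> B) : Prop := forall b, exists a, f a = b.

Section Modules.
Variable S : pzRingType.

Definition is_lin (M N : lmodType S) (f : M -> N) : Prop := linear f.

Definition exact_at (A B C : lmodType S) (g : A -> B) (f : B -> C) : Prop :=
  forall b : B, f b = 0 <-> exists a : A, g a = b.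

Definition fin_gen (M : lmodType S) : Prop :=
  exists (n : nat) (f : 'rV[S]_n -> M), is_lin f /\ surj f.

Definition fin_pres (M : lmodType S) : Prop :=
  exists (n m : nat) (f : 'rV[S]_n -> M) (g : 'rV[S]_m -> 'rV[S]_n),
    [/\ is_lin f, is_lin g, surj f & exact_at g f].

Definition projective (P : lmodType S) : Prop :=
  forall (N1 N2 : lmodType S) (p : N1 -> N2) (h : P -> N2),
    is_lin p -> surj p -> is_lin h ->
    exists k : P -> N1, is_lin k /\ (forall x, p (k x) = h x).

Definition zero_module (M : lmodType S) : Prop := forall x : M, x = 0.

(* M has a finite-dimensional (finite length) resolution by finitely
   generated projective modules:
     0 -> P_n -> ... -> P_1 -> P_0 -> M -> 0  exact,
   encoded with P : nat -> lmodType S, d i : P (i+1) -> P i, eps : P 0 -> M,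
   and P i = 0 for all i >= n. *)
Definition fin_fgproj_resolution (M : lmodType S) : Prop :=
  exists (P : nat -> lmodType S) (d : forall i, P i.+1 -> P i)
         (eps : P 0%N -> M) (n : nat),
    [/\ (forall i, fin_gen (P i) /\ projective (P i)),
        (forall i, is_lin (d i)) /\ (is_lin eps /\ surj eps),
        exact_at (d 0%N) eps,
        (forall i, exact_at (d i.+1) (d i))
      & (forall i, (n <= i)%N -> zero_module (P i))].

Definition left_ideal (I : S -> Prop) : Prop :=
  [/\ I 0, forall x y, I x -> I y -> I (x + y) & forall a x, I x -> I (a * x)].

Definition noetherian : Prop :=
  forall I : S -> Prop, left_ideal I ->
    exists X : seq S, (forall x, x \in X -> I x) /\
      (forall y, I y -> exists c : S -> S, y = \sum_(x <- X) c x * x).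

Definition regular_ring : Prop :=
  noetherian /\
  forall M : lmodType S, fin_gen M -> fin_fgproj_resolution M.

Definition regular_coherent_ring : Prop :=
  forall M : lmodType S, fin_pres M -> fin_fgproj_resolution M.

End Modules.

(* S (with i : R -> S and u : G -> S) is the group ring RG:
   i is a ring morphism, u a monoid morphism into the multiplicative monoid of S, i r and u g
   commute, and (u g)_{g in G} is a basis of S as a left R-module
   (R acting through i). This determines S up to isomorphism. *)
Definition is_group_ring (R S : pzRingType) (G : groupType)
    (i : {rmorphism R -> S}) (u : G -> S) : Prop :=
  [/\ u 1%g = 1,
      forall g h : G, u (g * h)%g = u g * u h,
      forall (r : R) (g : G), i r * u g = u g * i r,
      forall s : S, exists (X : seq G) (c : G -> R),
        s = \sum_(g <- X) i (c g) * u g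
    &
      forall (X : seq G) (c : G -> R), uniq X ->
        \sum_(g <- X) i (c g) * u g = 0 -> forall g, g \in X -> c g = 0].

Definition regular_coherent_group (G : groupType) : Prop :=
  forall (R : pzRingType), regular_ring R ->
  forall (S : pzRingType) (i : {rmorphism R -> S}) (u : G -> S),
    is_group_ring i u -> regular_coherent_ring S.

Definition torsionfree (G : groupType) : Prop :=
  forall (g : G) (n : nat), (0 < n)%N -> (g ^+ n)%g = 1%g -> g = 1%g.

From HB Require Import structures.
From mathcomp Require Import all_boot all_order all_algebra finmap.
From mathcomp.multinomials Require Import monalg.
From mathcomp Require Import zify.
From Stdlib Require Import Classical.

(* Let [g] have finite order [m > 1] and let [p] be a prime divisor of [m].
   In [S = F_p[G]] put [D = 1 - g] and [N = 1 + g + ... + g^(m-1)].  Since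
   [<g>] acts freely on [G] by translations, the kernel of multiplication by
   [D] (resp. [N]), on either side, is the image of multiplication by [N]
   (resp. [D]).  Hence the left ideal [M = S N] is finitely presented by
   right multiplications [S --D--> S --N--> M --> 0], and the 2-periodic complex
   [... --D--> X --N--> X --D--> ...] is exact for [X = S], hence for finitely
   generated projective modules, hence, by dimension shifting, for every
   module with a finite resolution by such modules.  It is not exact for
   [X = M]: [D N = 0], but [N = N w] with [w = t N] in [M] would give
   [1 - N t] in [S D], and the augmentation would yield [1 = m eps(t) = 0] in
   [F_p].  As [F_p] is regular, [G] is not regular coherent. *)

Set Implicit Arguments.
Unset Strict Implicit.
Unset Printing Implicit Defensive.

Import GRing.Theory.
Local Open Scope ring_scope.

(** * Multiplications on modules with finite resolutions *)

Section LinearMaps.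
Variables (S : pzRingType) (M N : lmodType S) (f : M -> N).
Hypothesis lin_f : is_lin f.

Lemma lin_add u v : f (u + v) = f u + f v.
Proof. by have := lin_f 1 u v; rewrite !scale1r. Qed.

Lemma lin0 : f 0 = 0.
Proof. by apply/(addrI (f 0)); rewrite -lin_add !addr0. Qed.

Lemma lin_scale a u : f (a *: u) = a *: f u.
Proof. by have := lin_f a u 0; rewrite !addr0 lin0 addr0. Qed.

Lemma lin_sub u v : f (u - v) = f u - f v.
Proof. by rewrite lin_add -scaleN1r lin_scale scaleN1r. Qed.

Lemma lin_sum I (r : seq I) (F : I -> M) :
  f (\sum_(i <- r) F i) = \sum_(i <- r) f (F i).
Proof. exact: (big_morph f lin_add lin0). Qed.

End LinearMaps.

Lemma lin_comp (S : pzRingType) (M N L : lmodType S) (f : M -> N) (g : N -> L) :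
  is_lin f -> is_lin g -> is_lin (g \o f).
Proof. by move=> lin_f lin_g a u v /=; rewrite lin_f lin_g. Qed.

Definition ker_in_image (S : pzRingType) (a b : S) (M : lmodType S) :=
  forall y : M, a *: y = 0 -> exists w, y = b *: w.

Section KerInImage.
Variables (S : pzRingType) (a b : S).

Lemma ker_in_image_rV k : ker_in_image a b S^o -> ker_in_image a b 'rV[S]_k.
Proof.
move=> kerS y ay0.
have t_ex j : exists t, y 0 j == b * t.
  have /kerS [t ->] : a * y 0 j = 0.
    by have := congr1 (fun v : 'rV[S]_k => v 0 j) ay0; rewrite !mxE.
  by exists t.
exists (\row_j xchoose (t_ex j)); apply/rowP => j; rewrite !mxE.
exact/eqP/(xchooseP (t_ex j)).
Qed.

Lemma ker_in_image_retract (M N : lmodType S) (f : N -> M) (s : M -> N) :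
  is_lin f -> is_lin s -> cancel s f -> ker_in_image a b N -> ker_in_image a b M.
Proof.
move=> lin_f lin_s sK kerN m am0.
have [|w sm_eq] := kerN (s m); first by rewrite -(lin_scale lin_s) am0 (lin0 lin_s).
by exists (f w); rewrite -(lin_scale lin_f) -sm_eq sK.
Qed.

End KerInImage.

Lemma fin_gen_proj_retract (S : pzRingType) (P : lmodType S) :
  fin_gen P -> projective P -> exists k (f : 'rV[S]_k -> P) (s : P -> 'rV[S]_k),
    [/\ is_lin f, is_lin s & cancel s f].
Proof.
move=> [k [f [lin_f surj_f]]] proj_P.
have [s [lin_s fsK]] := proj_P _ _ f id lin_f surj_f (fun _ _ _ => erefl).
by exists k, f, s.
Qed.

Section ResolutionChase.
Local Unset Implicit Arguments.
Variables (S : pzRingType) (M : lmodType S) (P : nat -> lmodType S).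
Variables (d : forall i, P i.+1 -> P i) (eps : P 0%N -> M) (len : nat).
Hypotheses (lin_d : forall i, is_lin (d i)) (lin_eps : is_lin eps).
Hypotheses (surj_eps : surj eps) (exact_eps : exact_at (d 0%N) eps).
Hypotheses (exact_d : forall i, exact_at (d i.+1) (d i)).
Hypothesis P_zero : forall i, (len <= i)%N -> zero_module (P i).

(* Dimension shifting: the relation moves up the resolution with [a] and [b]
   exchanged at each step, until it reaches the zero modules. *)
Lemma resolution_ker_lift k : forall (a b : S) i, a * b = 0 -> b * a = 0 ->
  (forall j, ker_in_image a b (P j)) -> (forall j, ker_in_image b a (P j)) ->
  (len <= i + k)%N -> forall (y : P i) z, a *: y = d i z ->
  exists w v, y = b *: w + d i v.
Proof.
elim: k => [|k IH] a b i ab0 ba0 ker_ab ker_ba len_le y z ay_dz.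
  exists 0, 0; rewrite scaler0 (lin0 (lin_d i)) addr0.
  by apply: P_zero; rewrite -(addn0 i).
have d_bz0 : d i (b *: z) = 0.
  by rewrite (lin_scale (lin_d i)) -ay_dz scalerA ba0 scale0r.
have [z' dz'_bz] := proj1 (exact_d i _) d_bz0.
have [|w' [v' z_eq]] := IH b a i.+1 ba0 ab0 ker_ba ker_ab _ z z' (esym dz'_bz).
  by rewrite addSnnS.
have dd0 u : d i (d i.+1 u) = 0 by apply/(proj2 (exact_d i _)); exists u.
have [|w y_eq] := ker_ab i (y - d i w').
  rewrite scalerBr ay_dz z_eq (lin_add (lin_d i)) dd0 addr0.
  by rewrite (lin_scale (lin_d i)) subrr.
by exists w, w'; rewrite -y_eq subrK.
Qed.

Lemma ker_in_image_resolved (a b : S) : a * b = 0 -> b * a = 0 ->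
  (forall j, ker_in_image a b (P j)) -> (forall j, ker_in_image b a (P j)) ->
  ker_in_image a b M.
Proof.
move=> ab0 ba0 ker_ab ker_ba m; have [y0 <-] := surj_eps m => am0.
have [z dz] : exists z, d 0%N z = a *: y0.
  by apply: (proj1 (exact_eps _)); rewrite (lin_scale lin_eps).
have [w [v ->]] := resolution_ker_lift len a b 0 ab0 ba0 ker_ab ker_ba
  (leq_addl 0 len) y0 z (esym dz).
have eps_dv : eps (d 0%N v) = 0 by apply/(proj2 (exact_eps _)); exists v.
by exists (eps w); rewrite (lin_add lin_eps) eps_dv addr0 (lin_scale lin_eps).
Qed.

End ResolutionChase.

Lemma ker_in_image_of_resolution (S : pzRingType) (a b : S) (M : lmodType S) :
  a * b = 0 -> b * a = 0 -> ker_in_image a b S^o -> ker_in_image b a S^o ->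
  fin_fgproj_resolution M -> ker_in_image a b M.
Proof.
move=> ab0 ba0 kerS_ab kerS_ba.
move=> [P [d [eps [len [fgproj [lin_d [lin_eps surj_eps]] ex0 exS Pz]]]]].
have ker_P a' b' : ker_in_image a' b' S^o -> forall j, ker_in_image a' b' (P j).
  move=> kerS j; have [fg_P proj_P] := fgproj j.
  have [k [f [s [lin_f lin_s sK]]]] := fin_gen_proj_retract fg_P proj_P.
  exact: ker_in_image_retract lin_f lin_s sK (ker_in_image_rV kerS).
exact: (ker_in_image_resolved _ _ _ _ _ _ lin_d lin_eps surj_eps ex0 exS Pz
  _ _ ab0 ba0 (ker_P _ _ kerS_ab) (ker_P _ _ kerS_ba)).
Qed.

(** * Finite fields are regular *)

Lemma rV_projective (S : pzRingType) k : projective 'rV[S]_k.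
Proof.
move=> N1 N2 p h lin_p surj_p lin_h.
have lift_ex j : exists y, p y == h (delta_mx 0 j).
  by have [y py] := surj_p (h (delta_mx 0 j)); exists y; apply/eqP.
exists (fun v : 'rV[S]_k => \sum_j v 0 j *: xchoose (lift_ex j)); split.
  move=> a u v; rewrite scaler_sumr -big_split /=; apply: eq_bigr => j _.
  by rewrite !mxE scalerDl scalerA.
move=> v; rewrite (lin_sum lin_p) [in RHS](row_sum_delta v) (lin_sum lin_h).
apply: eq_bigr => j _; rewrite (lin_scale lin_p) (lin_scale lin_h).
by rewrite (eqP (xchooseP (lift_ex j))).
Qed.

Lemma retract_projective (S : pzRingType) (P M : lmodType S)
    (f : P -> M) (s : M -> P) :
  projective P -> is_lin f -> is_lin s -> cancel s f -> projective M.
Proof.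
move=> proj_P lin_f lin_s sK N1 N2 p h lin_p surj_p lin_h.
have [k [lin_k pk]] := proj_P _ _ p (h \o f) lin_p surj_p (lin_comp lin_f lin_h).
by exists (k \o s); split=> [|m]; [exact: lin_comp | rewrite pk /= sK].
Qed.

Lemma noetherian_field (F : fieldType) : noetherian F.
Proof.
move=> I _; have [[x [Ix x_neq0]]|] := classic (exists x, I x /\ x != 0).
  exists [:: x]; split=> [y|y _]; first by rewrite inE => /eqP ->.
  by exists (fun _ => y / x); rewrite big_seq1 divfK.
move=> I_0; exists [::]; split=> // y Iy; exists (fun _ => 0); rewrite big_nil.
by case: (eqVneq y 0) => // y_neq0; case: I_0; exists y.
Qed.

Section FinFieldSection.
Variables (F : finFieldType) (k : nat) (M : lmodType F) (f : 'rV[F]_k -> M).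
Hypotheses (lin_f : is_lin f) (surj_f : surj f).

(* The kernel of [f] is finite; its elements are the rows of [ker_mx], and a
   complement of this row space carries a linear section of [f]. *)
Definition ker_mx : 'M[F]_(#|[set v | f v == 0]|, k) :=
  \matrix_i enum_val i.

Lemma sub_ker_mx v : (v <= ker_mx)%MS = (f v == 0).
Proof.
apply/idP/idP => [/submxP [w ->] | fv0].
  rewrite mulmx_sum_row (lin_sum lin_f) big1 // => i _.
  rewrite (lin_scale lin_f) rowK.
  by have := enum_valP i; rewrite inE => /eqP ->; rewrite scaler0.
have v_ker : v \in [set v | f v == 0] by rewrite inE.
by rewrite -(enum_rankK_in v_ker v_ker) -(rowK (fun i => enum_val i)) row_sub.
Qed.

Lemma compl_ker_inj c1 c2 : (c1 <= ker_mx^C)%MS -> (c2 <= ker_mx^C)%MS ->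
  f c1 = f c2 -> c1 = c2.
Proof.
move=> c1C c2C fc12; apply/eqP; rewrite -subr_eq0 -submx0 -(capmx_compl ker_mx).
rewrite sub_capmx sub_ker_mx (lin_sub lin_f) fc12 subrr eqxx /=.
by rewrite addmx_sub // -scaleN1r scalemx_sub.
Qed.

Lemma compl_ker_preimage m : exists c, (c <= ker_mx^C)%MS && (f c == m).
Proof.
have [v <-] := surj_f m.
have : (v <= ker_mx + ker_mx^C)%MS by apply/submx_full/addsmx_compl_full.
move=> /sub_addsmxP [[u1 u2] /= ->]; exists (u2 *m ker_mx^C)%MS.
have /eqP fu1 : f (u1 *m ker_mx) == 0 by rewrite -sub_ker_mx submxMl.
by rewrite submxMl (lin_add lin_f) fu1 add0r /=.
Qed.

Definition ker_section m := xchoose (compl_ker_preimage m).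

Lemma ker_sectionP m : (ker_section m <= ker_mx^C)%MS /\ f (ker_section m) = m.
Proof. by have /andP [? /eqP] := xchooseP (compl_ker_preimage m). Qed.

Lemma ker_section_lin : is_lin ker_section.
Proof.
move=> a u v; have [Cuv fuv] := ker_sectionP (a *: u + v).
have [Cu fu] := ker_sectionP u; have [Cv fv] := ker_sectionP v.
apply: compl_ker_inj => //; first by rewrite addmx_sub // scalemx_sub.
by rewrite (lin_add lin_f) (lin_scale lin_f) fuv fu fv.
Qed.

Lemma fin_gen_projective_finField : projective M.
Proof.
have ker_sectionK : cancel ker_section f by move=> m; case: (ker_sectionP m).
exact: (retract_projective (@rV_projective F k) lin_f ker_section_lin ker_sectionK).
Qed.

End FinFieldSection.

Lemma rV0_zero (S : pzRingType) : zero_module 'rV[S]_0.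
Proof. by move=> x; apply/rowP => -[]. Qed.

Lemma regular_finField (F : finFieldType) : regular_ring F.
Proof.
split=> [|M [k [f [lin_f surj_f]]]]; first exact: noetherian_field.
pose P i := if i is 0%N then M else 'rV[F]_0.
pose d i := (fun _ => 0) : P i.+1 -> P i.
have rV0_fg : fin_gen 'rV[F]_0 by exists 0%N, id; split=> // v; exists v.
exists P, d, id, 1%N; split.
- case=> [|i] /=; last by split; [exact: rV0_fg | exact: rV_projective].
  by split; [exists k, f | exact: fin_gen_projective_finField lin_f surj_f].
- by split=> [i a u v|]; [rewrite /d scaler0 addr0 | split=> // m; exists m].
- by move=> m; split=> [-> | [? <-]] //; exists 0.
- by move=> i v; split=> _ //; exists 0; apply/esym/rV0_zero.
- by case=> [|i] //= _; exact: rV0_zero.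
Qed.

(** * Group rings *)

(* [monalg] builds the convolution ring only over a [monomType], whose axiom
   [x * y = 1 -> x = 1] fails in a nontrivial group. *)
Section GroupRing.
Variables (K : groupType) (R : nzRingType).

Definition grpring := malg K R.
HB.instance Definition _ := GRing.Zmodule.on grpring.
Implicit Types (g : grpring) (k : K).

Local Open Scope fset.

Definition grone : grpring := << (1%g : K) >>.

Definition grmul g1 g2 : grpring :=
  \sum_(k1 <- msupp g1) \sum_(k2 <- msupp g2) << g1@_k1 * g2@_k2 *g (k1 * k2)%g >>.

Lemma grmul_supp (d1 d2 : {fset K}) g1 g2 :
  msupp g1 `<=` d1 -> msupp g2 `<=` d2 ->
  grmul g1 g2 =
    \sum_(k1 <- d1) \sum_(k2 <- d2) << g1@_k1 * g2@_k2 *g (k1 * k2)%g >>.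
Proof.
move=> le_d1 le_d2; rewrite /grmul (big_fset_incl _ le_d1) /=.
  apply/eq_bigr=> k1 _; apply/big_fset_incl => // k _ /mcoeff_outdom ->.
  by rewrite mulr0 monalgU0.
move=> k _ /mcoeff_outdom g1k.
by rewrite big1 => // k' _; rewrite g1k mul0r monalgU0.
Qed.

Lemma grmul0g : left_zero 0 grmul.
Proof. by move=> g; rewrite /grmul msupp0 big_seq_fset0. Qed.

Lemma grmulg0 : right_zero 0 grmul.
Proof. by move=> g; rewrite /grmul exchange_big msupp0 big_seq_fset0. Qed.

Lemma grmulUg c k g :
  grmul << c *g k >> g = \sum_(k' <- msupp g) << c * g@_k' *g (k * k')%g >>.
Proof.
rewrite (grmul_supp msuppU_le (fsubset_refl _)) big_seq_fset1.
by apply/eq_bigr => k' _; rewrite mcoeffUU.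
Qed.

Lemma grmulgU c k g :
  grmul g << c *g k >> = \sum_(k' <- msupp g) << g@_k' * c *g (k' * k)%g >>.
Proof.
rewrite (grmul_supp (fsubset_refl _) msuppU_le).
by apply/eq_bigr=> k' _; rewrite big_seq_fset1 mcoeffUU.
Qed.

Lemma grmulUU c1 c2 k1 k2 :
  grmul << c1 *g k1 >> << c2 *g k2 >> = << c1 * c2 *g (k1 * k2)%g >>.
Proof. by rewrite (grmul_supp msuppU_le msuppU_le) !big_seq_fset1 !mcoeffUU. Qed.

Lemma grmul1g : left_id grone grmul.
Proof.
move=> g; rewrite grmulUg [RHS]monalgE.
by apply/eq_bigr=> k _; rewrite mul1r mul1g.
Qed.

Lemma grmulg1 : right_id grone grmul.
Proof.
move=> g; rewrite grmulgU [RHS]monalgE.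
by apply/eq_bigr=> k _; rewrite mulr1 mulg1.
Qed.

Lemma grmulDl : left_distributive grmul +%R.
Proof.
move=> g1 g2 g; rewrite (grmul_supp (msuppD_le _ _) (fsubset_refl _)).
rewrite (grmul_supp (fsubsetUl _ (msupp g2)) (fsubset_refl _)).
rewrite (grmul_supp (fsubsetUr (msupp g1) _) (fsubset_refl _)).
rewrite -big_split /=; apply/eq_bigr=> k1 _.
rewrite -big_split /=; apply/eq_bigr=> k2 _.
by rewrite mcoeffD mulrDl monalgUD.
Qed.

Lemma grmulDr : right_distributive grmul +%R.
Proof.
move=> g g1 g2; rewrite (grmul_supp (fsubset_refl _) (msuppD_le _ _)).
rewrite (grmul_supp (fsubset_refl _) (fsubsetUl _ (msupp g2))).
rewrite (grmul_supp (fsubset_refl _) (fsubsetUr (msupp g1) _)).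
rewrite -big_split /=; apply/eq_bigr=> k1 _.
rewrite -big_split /=; apply/eq_bigr=> k2 _.
by rewrite mcoeffD mulrDr monalgUD.
Qed.

Lemma grmul_suml g1 g2 :
  grmul g1 g2 = \sum_(k1 <- msupp g1) grmul << g1@_k1 *g k1 >> g2.
Proof. by apply/eq_bigr=> k _; rewrite grmulUg. Qed.

Lemma grmul_sumr g1 g2 :
  grmul g1 g2 = \sum_(k2 <- msupp g2) grmul g1 << g2@_k2 *g k2 >>.
Proof. by rewrite {1}/grmul exchange_big; apply/eq_bigr=> k _; rewrite grmulgU. Qed.

Lemma grmulA : associative grmul.
Proof.
(* [sumDl] and [sumDr] also rewrite a [grmul] seen as its defining sum. *)
have sumDl := big_morph (grmul^~ _) (fun _ _ => grmulDl _ _ _) (grmul0g _).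
have sumDr := big_morph (grmul _) (fun _ _ => grmulDr _ _ _) (grmulg0 _).
move=> g1 g2 g3; rewrite [RHS]sumDl grmul_suml; apply/eq_bigr=> k1 _.
rewrite [LHS]sumDr [RHS]sumDl; apply/eq_bigr=> k2 _.
rewrite [LHS]sumDr grmul_sumr; apply/eq_bigr=> k3 _.
by rewrite !grmulUU mulrA mulgA.
Qed.

Lemma grone_neq0 : grone != 0.
Proof. by apply/eqP/malgP=> /(_ 1%g) /eqP; rewrite mcoeffUU mcoeff0 oner_eq0. Qed.

HB.instance Definition _ := GRing.Zmodule_isRing.Build grpring
  grmulA grmul1g grmulg1 grmulDl grmulDr grone_neq0.

End GroupRing.

Section GroupRingTheory.
Variables (K : groupType) (R : nzRingType).
Local Notation S := (grpring K R).
Implicit Types (t : S) (k a : K).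

Lemma grmulE (g1 g2 : S) : g1 * g2 = grmul g1 g2. Proof. by []. Qed.

Lemma malgUM k1 k2 : (<< k1 >> : S) * << k2 >> = << (k1 * k2)%g >>.
Proof. by rewrite grmulE grmulUU mulr1. Qed.

Lemma malgUX k i : (<< k >> : S) ^+ i = << (k ^+ i)%g >>.
Proof. by elim: i => [|i IH]; rewrite ?expg0 // exprS IH malgUM expgS. Qed.

Lemma mcoeff_sum_eq t a : \sum_(k <- msupp t) t@_k *+ (k == a) = t@_a.
Proof.
rewrite [in RHS](monalgE t) raddf_sum /=.
by apply: eq_bigr => k _; rewrite mcoeffU.
Qed.

Lemma mcoeff_UM k t a : ((<< k >> : S) * t)@_a = t@_(k^-1 * a)%g.
Proof.
rewrite grmulE grmulUg raddf_sum /= -mcoeff_sum_eq; apply: eq_bigr => k' _.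
by rewrite mcoeffU mul1r -(inj_eq (mulgI k^-1)%g) mulKg.
Qed.

Lemma mcoeff_MU k t a : (t * (<< k >> : S))@_a = t@_(a * k^-1)%g.
Proof.
rewrite grmulE grmulgU raddf_sum /= -mcoeff_sum_eq; apply: eq_bigr => k' _.
by rewrite mcoeffU mulr1 -(inj_eq (mulIg k^-1)%g) mulgK.
Qed.

Definition grC (c : R) : S := << c *g 1%g >>.
Definition grU k : S := << k >>.

Lemma grC_is_additive : additive grC.
Proof. by move=> x y; rewrite /grC monalgUB. Qed.
HB.instance Definition _ := GRing.isAdditive.Build R S grC grC_is_additive.

Lemma grC_is_multiplicative : multiplicative grC.
Proof. by split => // x y; rewrite /grC grmulE grmulUU mulg1. Qed.
HB.instance Definition _ :=
  GRing.isMultiplicative.Build R S grC grC_is_multiplicative.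

Lemma grCU c k : grC c * grU k = << c *g k >>.
Proof. by rewrite /grC /grU grmulE grmulUU mulr1 mul1g. Qed.

Lemma grUC c k : grU k * grC c = << c *g k >>.
Proof. by rewrite /grC /grU grmulE grmulUU mul1r mulg1. Qed.

Lemma grpring_is_group_ring : is_group_ring grC grU.
Proof.
split=> // [g h | r g | s | X c uX sum0 g gX]; first by rewrite /grU malgUM.
- by rewrite grCU grUC.
- exists (msupp s), (fun g => s@_g).
  by rewrite [LHS]monalgE; apply: eq_bigr => g _; rewrite grCU.
- have := congr1 (mcoeff g) sum0; rewrite mcoeff0 raddf_sum /=.
  rewrite (bigD1_seq g) //= grCU mcoeffUU big1 ?addr0 // => g' ne.
  by rewrite grCU mcoeffU (negbTE ne).
Qed.

Definition augment (s : S) : R := mmap idfun (fun _ => 1) s.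

Lemma augment_is_additive : additive augment.
Proof. by move=> x y; rewrite /augment raddfB. Qed.
HB.instance Definition _ := GRing.isAdditive.Build S R augment augment_is_additive.

Lemma augmentU c k : augment << c *g k >> = c.
Proof. by rewrite /augment mmapU mulr1. Qed.

Lemma augmentE s : augment s = \sum_(k <- msupp s) s@_k.
Proof. by rewrite /augment mmapE; apply: eq_bigr => k _; rewrite mulr1. Qed.

Lemma augment_is_multiplicative : multiplicative augment.
Proof.
split=> [s1 s2|]; last exact: augmentU.
rewrite grmulE /grmul raddf_sum !augmentE big_distrl /=; apply: eq_bigr => k1 _.
by rewrite raddf_sum big_distrr /=; apply: eq_bigr => k2 _; rewrite augmentU.
Qed.
HB.instance Definition _ :=
  GRing.isMultiplicative.Build S R augment augment_is_multiplicative.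

End GroupRingTheory.

(** * Free actions of a finite cyclic group *)

(* [tau] generates a free action of [Z/nZ] on [K]; [trace_of_invariant] and
   [coboundary_of_trace0] say that the Tate cohomology of the induced module
   [{malg V[K]}] vanishes. *)
Section FreeCyclicAction.
Variables (K : choiceType) (V : zmodType) (n : nat) (tau : K -> K).
Hypothesis n_gt0 : (0 < n)%N.
Hypothesis iter_tau_n : forall a, iter n tau a = a.
Hypothesis iter_tau_inj : forall a i j, (i < n)%N -> (j < n)%N ->
  iter i tau a = iter j tau a -> i = j.
Implicit Types (a b : K) (f : {malg V[K]}).

Definition tau_orbit a : pred K := fun b => [exists i : 'I_n, b == iter i tau a].

Lemma tau_orbit_refl a : tau_orbit a a.
Proof. by apply/existsP; exists (Ordinal n_gt0). Qed.

Lemma tau_orbit_tau a : tau_orbit (tau a) =1 tau_orbit a.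
Proof.
move=> b; apply/existsP/existsP => [[i /eqP ->]|[[[|i] lt_in] /eqP ->]].
- rewrite -iterSr; have [lt_in|ge_in] := ltnP i.+1 n.
    by exists (Ordinal lt_in).
  have -> : i.+1 = n by have := ltn_ord i; lia.
  by exists (Ordinal n_gt0); rewrite iter_tau_n.
- have lt_n1n : (n.-1 < n)%N by rewrite prednK.
  by exists (Ordinal lt_n1n); rewrite /= -iterSr prednK // iter_tau_n.
- have lt_in' : (i < n)%N by apply: ltnW.
  by exists (Ordinal lt_in'); rewrite /= -iterSr.
Qed.

Definition orbit_rep a := choose (tau_orbit a) a.

Lemma orbit_rep_in a : tau_orbit a (orbit_rep a).
Proof. exact: chooseP (tau_orbit_refl a). Qed.

Lemma orbit_rep_iter k a : orbit_rep (iter k tau a) = orbit_rep a.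
Proof.
elim: k => [|k IH] //=; rewrite -IH /orbit_rep (eq_choose (tau_orbit_tau _)).
by apply: choose_id; rewrite ?tau_orbit_refl // -tau_orbit_tau tau_orbit_refl.
Qed.

Lemma orbit_rep_tau a : orbit_rep (tau a) = orbit_rep a.
Proof. exact: (orbit_rep_iter 1). Qed.

Lemma trace_of_invariant f : (forall a, f@_(tau a) = f@_a) ->
  exists t : {malg V[K]}, forall a, \sum_(i < n) t@_(iter i tau a) = f@_a.
Proof.
move=> f_tau; have f_iter k a : f@_(iter k tau a) = f@_a.
  by elim: k => [|k IH] //=; rewrite f_tau.
exists [malg a in msupp f => if a == orbit_rep a then f@_a else 0] => a.
have tE b : [malg a in msupp f => if a == orbit_rep a then f@_a else 0]@_b =
    if b == orbit_rep b then f@_b else 0.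
  by rewrite mcoeffE; case: ifP => // /negbT /mcoeff_outdom ->; case: ifP.
have /existsP [i0 /eqP rep_a] := orbit_rep_in a.
rewrite (bigD1 i0) //= tE orbit_rep_iter -rep_a eqxx rep_a f_iter.
rewrite big1 ?addr0 // => i ne_i_i0; rewrite tE orbit_rep_iter rep_a.
case: eqP => // /iter_tau_inj eq_i_i0.
by rewrite (val_inj (eq_i_i0 (ltn_ord i) (ltn_ord i0))) eqxx in ne_i_i0.
Qed.

Definition steps_to_rep a : nat :=
  if [pick j : 'I_n | iter j.+1 tau a == orbit_rep a] is Some j then j else 0.

Lemma steps_to_repP a :
  (steps_to_rep a < n)%N /\ iter (steps_to_rep a).+1 tau a = orbit_rep a.
Proof.
rewrite /steps_to_rep; case: pickP => [j /eqP -> // | none].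
exfalso; have /existsP [[[|i] lt_in] /eqP rep_a] := orbit_rep_in a.
- have lt_n1n : (n.-1 < n)%N by rewrite prednK.
  move: (none (Ordinal lt_n1n)).
  by rewrite /= -iterS prednK // iter_tau_n rep_a eqxx.
- have lt_in' : (i < n)%N by apply: ltnW.
  by move: (none (Ordinal lt_in')); rewrite /= -iterS rep_a eqxx.
Qed.

Lemma steps_to_rep_uniq a j :
  (j < n)%N -> iter j.+1 tau a = orbit_rep a -> j = steps_to_rep a.
Proof.
move=> lt_jn rep_a; have [lt_sn rep_a'] := steps_to_repP a.
by apply: (iter_tau_inj (a := tau a)) => //; rewrite -!iterSr rep_a rep_a'.
Qed.

Lemma steps_to_rep_tau a :
  steps_to_rep (tau a) = if steps_to_rep a is j.+1 then j else n.-1.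
Proof.
have [] := steps_to_repP a.
case: (steps_to_rep a) => [|j] lt_jn rep_a; apply/esym/steps_to_rep_uniq.
- by rewrite prednK.
- by rewrite orbit_rep_tau -rep_a prednK // iter_tau_n.
- exact: ltnW.
- by rewrite orbit_rep_tau -rep_a -iterSr.
Qed.

Section CoboundaryOfTraceZero.
Variable f : {malg V[K]}.
Hypothesis trace_f0 : forall a, \sum_(i < n) f@_(iter i tau a) = 0.

Definition sum_to_rep a := \sum_(0 <= i < (steps_to_rep a).+1) f@_(iter i tau a).

Lemma sum_to_rep_tau a : sum_to_rep a - sum_to_rep (tau a) = f@_a.
Proof.
rewrite /sum_to_rep steps_to_rep_tau; case: (steps_to_rep a) => [|j].
  by rewrite prednK // [X in _ - X]big_mkord trace_f0 big_nat1 subr0.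
by rewrite big_nat_recl //; under eq_bigr do rewrite iterSr; rewrite addrK.
Qed.

Definition sum_to_rep_dom : {fset K} := seq_fset tt
  (flatten [seq [seq iter k tau b | k <- iota 0 n.+1] | b <- msupp f]).

Lemma sum_to_rep_out a : a \notin sum_to_rep_dom -> sum_to_rep a = 0.
Proof.
move=> a_out; rewrite /sum_to_rep big_nat big1 // => i /andP[_ lt_ij].
have [lt_jn _] := steps_to_repP a; have lt_in : (i < n)%N by lia.
apply/eqP; rewrite mcoeff_eq0; apply: contra a_out => supp_i.
rewrite seq_fsetE; apply/flatten_mapP; exists (iter i tau a) => //.
apply/mapP; exists (n - i)%N; first by rewrite mem_iota; lia.
by rewrite -iterD subnK ?iter_tau_n // ltnW.
Qed.

Lemma coboundary_of_trace0 :
  exists t : {malg V[K]}, forall a, t@_a - t@_(tau a) = f@_a.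
Proof.
exists [malg a in sum_to_rep_dom => sum_to_rep a] => a.
have tE b : [malg a in sum_to_rep_dom => sum_to_rep a]@_b = sum_to_rep b.
  by rewrite mcoeffE; case: ifPn => // /sum_to_rep_out ->.
by rewrite !tE sum_to_rep_tau.
Qed.

End CoboundaryOfTraceZero.
End FreeCyclicAction.

(** * Elements of finite order in a group ring *)

Section CyclicElement.
Variables (K : groupType) (R : nzRingType) (h : K) (n : nat).
Hypothesis n_gt0 : (0 < n)%N.
Hypothesis expgh_n : (h ^+ n)%g = 1%g.
Hypothesis expgh_inj : forall i j, (i < n)%N -> (j < n)%N ->
  (h ^+ i)%g = (h ^+ j)%g -> i = j.
Local Notation S := (grpring K R).
Implicit Types (s t : S) (a : K).

Definition cyc_norm : S := \sum_(i < n) grU R h ^+ i.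
Definition cyc_diff : S := 1 - grU R h.
Local Notation N := cyc_norm.
Local Notation D := cyc_diff.

Local Notation tauL := (fun a => h^-1 * a)%g.
Local Notation tauR := (fun a => a * h^-1)%g.

Lemma iter_tauL i a : iter i tauL a = (h^-1 ^+ i * a)%g.
Proof. by elim: i => [|i IH] /=; rewrite ?mul1g // IH expgS mulgA. Qed.

Lemma iter_tauR i a : iter i tauR a = (a * h^-1 ^+ i)%g.
Proof. by elim: i => [|i IH] /=; rewrite ?mulg1 // IH expgSr mulgA. Qed.

Lemma iter_tauL_n a : iter n tauL a = a.
Proof. by rewrite iter_tauL expVgn expgh_n invg1 mul1g. Qed.

Lemma iter_tauR_n a : iter n tauR a = a.
Proof. by rewrite iter_tauR expVgn expgh_n invg1 mulg1. Qed.

Lemma iter_tauL_inj a i j : (i < n)%N -> (j < n)%N ->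
  iter i tauL a = iter j tauL a -> i = j.
Proof.
rewrite !iter_tauL => lt_in lt_jn /mulIg.
by rewrite !expVgn => /invg_inj /expgh_inj; apply.
Qed.

Lemma iter_tauR_inj a i j : (i < n)%N -> (j < n)%N ->
  iter i tauR a = iter j tauR a -> i = j.
Proof.
rewrite !iter_tauR => lt_in lt_jn /mulgI.
by rewrite !expVgn => /invg_inj /expgh_inj; apply.
Qed.

Lemma mcoeff_UXM i t a : (grU R h ^+ i * t)@_a = t@_(iter i tauL a).
Proof.
elim: i t a => [|i IH] t a; first by rewrite expr0 mul1r.
by rewrite exprSr -mulrA IH mcoeff_UM.
Qed.

Lemma mcoeff_MUX i t a : (t * grU R h ^+ i)@_a = t@_(iter i tauR a).
Proof.
elim: i t a => [|i IH] t a; first by rewrite expr0 mulr1.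
by rewrite exprS mulrA IH mcoeff_MU.
Qed.

Lemma mcoeff_normM t a : (N * t)@_a = \sum_(i < n) t@_(iter i tauL a).
Proof.
by rewrite mulr_suml raddf_sum; apply: eq_bigr => i _ /=; rewrite mcoeff_UXM.
Qed.

Lemma mcoeff_Mnorm t a : (t * N)@_a = \sum_(i < n) t@_(iter i tauR a).
Proof.
by rewrite mulr_sumr raddf_sum; apply: eq_bigr => i _ /=; rewrite mcoeff_MUX.
Qed.

Lemma mcoeff_diffM t a : (D * t)@_a = t@_a - t@_(tauL a).
Proof. by rewrite mulrBl mul1r mcoeffB -(expr1 (grU R h)) mcoeff_UXM. Qed.

Lemma mcoeff_Mdiff t a : (t * D)@_a = t@_a - t@_(tauR a).
Proof. by rewrite mulrBr mulr1 mcoeffB -(expr1 (grU R h)) mcoeff_MUX. Qed.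

Lemma cyc_diffM_eq0 s : D * s = 0 -> exists t, s = N * t.
Proof.
move=> diff_s0.
have [|t trace_t] := trace_of_invariant n_gt0 iter_tauL_n iter_tauL_inj (f := s).
  by move=> a; apply/esym/eqP; rewrite -subr_eq0 -mcoeff_diffM diff_s0 mcoeff0.
by exists t; apply/malgP => a; rewrite mcoeff_normM trace_t.
Qed.

Lemma cyc_Mdiff_eq0 s : s * D = 0 -> exists t, s = t * N.
Proof.
move=> diff_s0.
have [|t trace_t] := trace_of_invariant n_gt0 iter_tauR_n iter_tauR_inj (f := s).
  by move=> a; apply/esym/eqP; rewrite -subr_eq0 -mcoeff_Mdiff diff_s0 mcoeff0.
by exists t; apply/malgP => a; rewrite mcoeff_Mnorm trace_t.
Qed.

Lemma cyc_normM_eq0 s : N * s = 0 -> exists t, s = D * t.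
Proof.
move=> norm_s0.
have [|t cobound_t] :=
  coboundary_of_trace0 n_gt0 iter_tauL_n iter_tauL_inj (f := s).
  by move=> a; rewrite -mcoeff_normM norm_s0 mcoeff0.
by exists t; apply/malgP => a; rewrite mcoeff_diffM cobound_t.
Qed.

Lemma cyc_Mnorm_eq0 s : s * N = 0 -> exists t, s = t * D.
Proof.
move=> norm_s0.
have [|t cobound_t] :=
  coboundary_of_trace0 n_gt0 iter_tauR_n iter_tauR_inj (f := s).
  by move=> a; rewrite -mcoeff_Mnorm norm_s0 mcoeff0.
by exists t; apply/malgP => a; rewrite mcoeff_Mdiff cobound_t.
Qed.

Lemma grU_expn : grU R h ^+ n = 1.
Proof. by rewrite /grU malgUX expgh_n. Qed.

Lemma grUM_norm : grU R h * N = N.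
Proof.
rewrite /cyc_norm mulr_sumr; under eq_bigr do rewrite -exprS.
case: n n_gt0 grU_expn => // m _ u_m1.
by rewrite big_ord_recr big_ord_recl /= u_m1 expr0 addrC.
Qed.

Lemma normM_grU : N * grU R h = N.
Proof.
rewrite /cyc_norm mulr_suml; under eq_bigr do rewrite -exprSr.
case: n n_gt0 grU_expn => // m _ u_m1.
by rewrite big_ord_recr big_ord_recl /= u_m1 expr0 addrC.
Qed.

Lemma cyc_diff_norm : D * N = 0.
Proof. by rewrite mulrBl mul1r grUM_norm subrr. Qed.

Lemma cyc_norm_diff : N * D = 0.
Proof. by rewrite mulrBr mulr1 normM_grU subrr. Qed.

Lemma augment_cyc_norm : augment N = n%:R.
Proof.
rewrite raddf_sum /= (eq_bigr (fun _ => 1)) ?sumr_const ?card_ord // => i _.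
by rewrite rmorphXn /= augmentU expr1n.
Qed.

Lemma augment_cyc_diff : augment D = 0.
Proof. by rewrite rmorphB rmorph1 /= augmentU subrr. Qed.


(* The left ideal [S N] (see [cyc_Mdiff_eq0]), defined as the right
   annihilator of [D] to make membership boolean. *)
Definition ann_diff : pred S^o := fun s => s * D == 0.

Lemma ann_diff_submod_closed : subsemimod_closed ann_diff.
Proof.
split; first split.
- by rewrite unfold_in /= mul0r.
- by move=> u v; rewrite !unfold_in /= mulrDl => /eqP -> /eqP ->; rewrite addr0.
- by move=> a v; rewrite !unfold_in /= => /eqP Dv0; rewrite -mulrA Dv0 mulr0.
Qed.

HB.instance Definition _ :=
  GRing.isSubmodClosed.Build _ _ ann_diff ann_diff_submod_closed.

Record ann_diff_mod := AnnDiff { ann_val : S^o ; _ : ann_val \in ann_diff }.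
HB.instance Definition _ := [isSub for ann_val].
HB.instance Definition _ := [Choice of ann_diff_mod by <:].
HB.instance Definition _ := [SubChoice_isSubLmodule of ann_diff_mod by <:].

Lemma mul_norm_ann_diff s : (s * N : S^o) \in ann_diff.
Proof. by rewrite unfold_in /= -mulrA cyc_norm_diff mulr0. Qed.

Lemma ann_diff_fin_pres : fin_pres ann_diff_mod.
Proof.
pose f (v : 'rV[S]_1) := AnnDiff (mul_norm_ann_diff (v 0 0)).
pose g (v : 'rV[S]_1) := \row_j (v 0 j * D).
exists 1%N, 1%N, f, g; split.
- by move=> a u v; apply: val_inj; rewrite /= !mxE mulrDl -mulrA.
- by move=> a u v; apply/rowP => j; rewrite !mxE mulrDl mulrA.
- move=> m; have /eqP/cyc_Mdiff_eq0 [t m_eq] := valP m.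
  by exists (\row_j t); apply: val_inj; rewrite /= mxE -m_eq.
- move=> v; split=> [/(congr1 val) /= /cyc_Mnorm_eq0 [t v_eq]|[u <-]].
    by exists (\row_j t); apply/rowP => j; rewrite !mxE (ord1 j) v_eq.
  by apply: val_inj; rewrite /= mxE -mulrA cyc_diff_norm mulr0.
Qed.

Hypothesis n_eq0 : n%:R = 0 :> R.

Lemma grpring_not_regular_coherent : ~ regular_coherent_ring S.
Proof.
move=> /(_ _ ann_diff_fin_pres) /(ker_in_image_of_resolution cyc_diff_norm
  cyc_norm_diff cyc_diffM_eq0 cyc_normM_eq0) ker_img.
have [|w /(congr1 val) /=] := ker_img (AnnDiff (mul_norm_ann_diff 1)).
  by apply: val_inj; rewrite /= mul1r; apply: cyc_diff_norm.
rewrite mul1r => N_eq; have /eqP/cyc_Mdiff_eq0 [t w_eq] := valP w.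
have /cyc_Mnorm_eq0 [t' t'_eq] : (1 - N * t) * N = 0.
  by rewrite mulrBl mul1r -mulrA -w_eq [in X in X - _]N_eq subrr.
have := congr1 (@augment K R) t'_eq; rewrite rmorphM /= augment_cyc_diff mulr0.
rewrite rmorphB rmorphM rmorph1 /= augment_cyc_norm n_eq0 mul0r subr0.
exact/eqP/oner_neq0.
Qed.

End CyclicElement.

Lemma nontrivial_torsion_order (G : groupType) (g : G) n :
  (0 < n)%N -> (g ^+ n)%g = 1%g -> g != 1%g ->
  exists2 m, (1 < m)%N & (g ^+ m)%g = 1%g /\
    forall i j, (i < m)%N -> (j < m)%N -> (g ^+ i)%g = (g ^+ j)%g -> i = j.
Proof.
move=> n_gt0 gn1 g_neq1.
have : exists m, (0 < m)%N && (g ^+ m == 1)%g by exists n; rewrite n_gt0 gn1 eqxx.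
case/ex_minnP => m /andP [m_gt0 /eqP gm1] m_min; exists m; last split=> //.
  case: m m_gt0 gm1 {m_min} => [|[|m]] // _.
  by rewrite expg1 => /eqP; rewrite (negbTE g_neq1).
suff lt_neq i j : (i < j)%N -> (j < m)%N -> (g ^+ i)%g != (g ^+ j)%g.
  move=> i j lt_im lt_jm gij; case: (ltngtP i j) => // [lt_ij|lt_ji].
  - by move: (lt_neq i j lt_ij lt_jm); rewrite gij eqxx.
  - by move: (lt_neq j i lt_ji lt_im); rewrite gij eqxx.
move=> lt_ij lt_jm; apply/eqP => gij.
have /mulgI gji1 : (g ^+ i * g ^+ (j - i) = g ^+ i * 1)%g.
  by rewrite mulg1 -expgnDr subnKC ?gij // ltnW.
have := m_min (j - i)%N; rewrite subn_gt0 lt_ij gji1 eqxx => /(_ isT); lia.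
Qed.

Theorem lemma4p3 (G : groupType) : regular_coherent_group G -> torsionfree G.
Proof.
move=> rc_G g n n_gt0 gn1; apply/eqP/negPn/negP => g_neq1.
have [m m_gt1 [gm1 expg_inj]] := nontrivial_torsion_order n_gt0 gn1 g_neq1.
have p_prime : prime (pdiv m) := pdiv_prime m_gt1.
apply: (grpring_not_regular_coherent (R := 'F_(pdiv m)) (ltnW m_gt1) gm1 expg_inj).
  by rewrite -[X in X%:R](divnK (pdiv_dvd m)) natrM pchar_Fp_0 // mulr0.
exact: rc_G _ (regular_finField _) _ _ _ (grpring_is_group_ring G 'F_(pdiv m)).
Qed.
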